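(* Let $\pi$ be an irreducible cuspidal representation of $G=GL_n(E)$ which is not distinguished with respect to $H=GL_n(F)$, i.e. $\mathrm{Hom}_H(\pi,\mathbb{1})=0$. Then for every function $\varphi:F^n\to\mathbb{C}$ (no condition on $\varphi(0)$) and every $W\in\mathcal{W}(\pi,\psi_E)$, \[ \gamma(\pi,\psi,As)\,Z(W,\varphi;\psi)=Z(\widetilde W,\mathcal{F}_\psi\varphi;\psi^{-1}). \]
   Context: $F=\mathbb{F}_q$, $E=\mathbb{F}_{q^2}$, $\theta(x)=x^q$; $\psi$ a nontrivial additive character of $F$, $\psi_E(x)=\psi\big(\frac{x-\theta(x)}{z-\theta(z)}\big)$ for a fixed $z\in E\setminus F$. $N_n$ is the upper triangular unipotent group, characters extended by $\psi_R(u)=\psi_R(\sum_iu_{i,i+1})$; $\mathcal{W}(\pi,\psi_E)$ is the Whittaker model. $Z(W,\varphi;\psi^{\pm1})=\sum_{g\in N_n(F)\backslash H}W(g)\varphi(e_ng)$ with $e_n=(0,\dots,0,1)$; $\widetilde W(g)=W(\omega_n{}^tg^{-1})$, $\omega_n$ the antidiagonal permutation matrix; $\mathcal{F}_\psi\varphi(y)=\sum_{x\in F^n}\varphi(x)\psi(\langle x,y\rangle)$. $\gamma(\pi,\psi,As)$ is the unique constant such that the displayed identity holds for all $W\in\mathcal{W}(\pi,\psi_E)$ and all $\varphi$ with $\varphi(0)=0$. *)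

From HB Require Import structures.
From mathcomp Require Import all_boot all_order all_algebra all_fingroup all_field all_character.
Set Implicit Arguments. Unset Strict Implicit. Unset Printing Implicit Defensive.
Import GRing.Theory Num.Theory.
Local Open Scope ring_scope.

(* E = F_{q^2} is a finite field E with #|E| = q^2; theta x = x^q; F is the
   fixed field of theta inside E, so F^n is the set of row vectors in E^n
   with all entries fixed by theta. The rank of GL is n.+1. *)

Section Defs.
Variables (E : finFieldType) (q : nat).

Definition theta (x : E) : E := x ^+ q.
Definition inF (x : E) : bool := theta x == x.
Definition inFvec m (x : 'rV[E]_m) : bool := [forall j, inF (x 0 j)].
Definition inFmx m (M : 'M[E]_m) : bool := [forall i, [forall j, inF (M i j)]].

Variables (psi : E -> algC) (z : E).

Definition psiE (x : E) : algC := psi ((x - theta x) / (z - theta z)).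

Variable n : nat.
Notation G := {'GL_n.+1[E]}.

(* a matrix viewed as an element of GL_{n+1}(E) (junk value 1 if singular) *)
Definition toGL (M : 'M[E]_n.+1) : G := insubd (1%g : G) M.

Definition upper_unipotent (M : 'M[E]_n.+1) : bool :=
  [forall i, [forall j, if i == j then M i j == 1
                        else (j < i)%N ==> (M i j == 0)]].

Definition superdiag_sum (M : 'M[E]_n.+1) : E :=
  \sum_(i < n) M (widen_ord (leqnSn n) i) (lift ord0 i).

Definition NF : {set G} :=
  [set g : G | upper_unipotent (GLval g) && inFmx (GLval g)].
Definition HF : {set G} := [set g : G | inFmx (GLval g)].

(* unipotent radical of the standard parabolic with block break points S *)
Definition same_block (S : {set 'I_n.+1}) (i j : 'I_n.+1) : bool :=
  [forall s in S, ~~ ((i < s)%N && (s <= j)%N)].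
Definition in_unip_radical (S : {set 'I_n.+1}) (M : 'M[E]_n.+1) : bool :=
  upper_unipotent M &&
  [forall i : 'I_n.+1, [forall j : 'I_n.+1, ((i < j)%N && same_block S i j) ==> (M i j == 0)]].
Definition proper_parabolic (S : {set 'I_n.+1}) : bool :=
  [exists s in S, (0 < s)%N].

Variables (d : nat) (rG : mx_representation algC [set: G]%G d).
(* pi(g) v := rG g *m v on column vectors v : 'cV_d *)

Definition cuspidal : Prop :=
  forall S : {set 'I_n.+1}, proper_parabolic S ->
  forall v : 'cV[algC]_d,
    (forall u : 'M[E]_n.+1, in_unip_radical S u -> rG (toGL u) *m v = v) ->
    v = 0.

Definition distinguished : Prop :=
  exists lam : 'rV[algC]_d, lam != 0 /\ forall h, h \in HF -> lam *m rG h = lam.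

Definition whittaker_functional (lam : 'rV[algC]_d) : Prop :=
  lam != 0 /\ forall u : 'M[E]_n.+1, upper_unipotent u ->
    lam *m rG (toGL u) = psiE (superdiag_sum u) *: lam.

Definition whittaker_model (W : 'M[E]_n.+1 -> algC) : Prop :=
  exists (lam : 'rV[algC]_d) (v : 'cV[algC]_d), whittaker_functional lam /\
    forall g, W g = (lam *m rG (toGL g) *m v) 0 0.

Definition omega : 'M[E]_n.+1 := \matrix_(i, j) ((i + j)%N == n)%:R.
Definition Wtilde (W : 'M[E]_n.+1 -> algC) (g : 'M[E]_n.+1) : algC :=
  W (omega *m (invmx g)^T).

Definition Zeta (W : 'M[E]_n.+1 -> algC) (phi : 'rV[E]_n.+1 -> algC) : algC :=
  \sum_(C in rcosets NF HF)
     W (GLval (repr C)) * phi (row ord_max (GLval (repr C))).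

Definition fourier (ps : E -> algC) (phi : 'rV[E]_n.+1 -> algC)
  (y : 'rV[E]_n.+1) : algC :=
  \sum_(x : 'rV[E]_n.+1 | inFvec x) phi x * ps ((x *m y^T) 0 0).

Definition is_gamma (c : algC) : Prop :=
  forall W, whittaker_model W ->
  forall phi : 'rV[E]_n.+1 -> algC, phi 0 = 0 ->
    c * Zeta W phi = Zeta (Wtilde W) (fourier psi phi).

End Defs.

Definition nontrivial_additive_char (E : finFieldType) (q : nat) (psi : E -> algC) : Prop :=
  (forall x y, inF q x -> inF q y -> psi (x + y) = psi x * psi y) /\
  exists x, inF q x /\ psi x != 1.

From Pilot Require Import Defs.
From HB Require Import structures.
From Stdlib Require Import Lia.
From mathcomp Require Import zify.
From mathcomp Require Import all_boot all_order all_algebra all_fingroup all_solvable all_field all_character.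
Set Implicit Arguments. Unset Strict Implicit. Unset Printing Implicit Defensive.
Import GRing.Theory Num.Theory.
Local Open Scope ring_scope.

(* Write phi = phi' + phi(0) 1_{0}, where phi' vanishes at 0. The left side of
   the identity does not see phi(0), because the last row e_n g of an
   invertible g is never 0; for phi' it is the defining identity of gamma.
   The Fourier transform of 1_{0} is the constant psi(0), and psi(0) = 1 as
   seen by evaluating a Whittaker functional at u = 1; so it remains to see
   that Z(W~, 1) vanishes. Unfolding the cosets, #|N_n(F)| Z(W~, 1) is
   lambda(pi(w) (sum_{h in H} pi(h)) v) after the substitution h -> t h^-1,
   and sum_{h in H} pi(h) = 0: each of its rows is an H-invariant functional,
   hence 0 since pi is not distinguished. *)

Section Frobenius.
Variables (E : finFieldType) (q : nat) (hE : #|E| = (q ^ 2)%N).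
Local Notation theta := (@theta E q).
Local Notation inF := (@inF E q).

Lemma q_pchar_power : exists p k, p \in [pchar E] /\ q = (p ^ k)%N.
Proof.
have [p _ pc] := finPcharP E.
have := abelem_pgroup (fin_ring_pchar_abelem pc).
rewrite /pgroup cardsT hE pnatX orbF => /p_natP[k ->].
by exists p, k.
Qed.

Lemma thetaD x y : theta (x + y) = theta x + theta y.
Proof.
have [p [k [pc ->]]] := q_pchar_power; rewrite /Defs.theta.
elim: k => [|k IH]; first by rewrite !expr1.
rewrite expnSr !exprM IH.
have := pFrobenius_autD_comm pc (mulrC (x ^+ (p ^ k)) (y ^+ (p ^ k))).
by rewrite !pFrobenius_autE.
Qed.

Lemma thetaM x y : theta (x * y) = theta x * theta y.
Proof. exact: exprMn. Qed.

Lemma theta0 : theta 0 = 0.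
Proof. by apply: (addrI (theta 0)); rewrite -thetaD !addr0. Qed.

Lemma theta1 : theta 1 = 1.
Proof. exact: expr1n. Qed.

Lemma inF0 : inF 0. Proof. by rewrite /Defs.inF theta0. Qed.
Lemma inF1 : inF 1. Proof. by rewrite /Defs.inF theta1. Qed.

Lemma inFD x y : inF x -> inF y -> inF (x + y).
Proof. by rewrite /Defs.inF thetaD => /eqP-> /eqP->. Qed.

Lemma inFM x y : inF x -> inF y -> inF (x * y).
Proof. by rewrite /Defs.inF thetaM => /eqP-> /eqP->. Qed.

Lemma inF_sum (I : finType) (P : pred I) (f : I -> E) :
  (forall i, P i -> inF (f i)) -> inF (\sum_(i | P i) f i).
Proof. by move=> Ff; elim/big_ind: _ => //; [exact: inF0 | exact: inFD]. Qed.

End Frobenius.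

Section FMatrices.
Variables (E : finFieldType) (q : nat) (hE : #|E| = (q ^ 2)%N) (n : nat).

Lemma upper_unipotentP (M : 'M[E]_n.+1) :
  reflect ((forall i, M i i = 1) /\ (forall i j : 'I_n.+1, (j < i)%N -> M i j = 0))
          (upper_unipotent M).
Proof.
apply: (iffP forallP) => [uM|[M1 M0] i].
  split=> [i|i j lt_ji]; first by have /forallP/(_ i) := uM i; rewrite eqxx => /eqP.
  have /forallP/(_ j) := uM i; rewrite lt_ji implyTb.
  by case: eqP => [ij|_ /eqP //]; move: lt_ji; rewrite ij ltnn.
apply/forallP=> j; case: eqP => [<-|_]; first by rewrite M1.
by apply/implyP => lt_ji; rewrite M0.
Qed.

Lemma inFmxP (M : 'M[E]_n.+1) : reflect (forall i j, inF q (M i j)) (inFmx q M).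
Proof.
apply: (iffP forallP) => [FM i j|FM i]; first by have /forallP := FM i; apply.
exact/forallP.
Qed.

Lemma upper_unipotent1 : upper_unipotent (1%:M : 'M[E]_n.+1).
Proof.
apply/upper_unipotentP; split=> [i|i j lt_ji]; first by rewrite mxE eqxx.
by rewrite mxE; case: eqP => // ij; move: lt_ji; rewrite ij ltnn.
Qed.

Lemma upper_unipotent_mul (A B : 'M[E]_n.+1) :
  upper_unipotent A -> upper_unipotent B -> upper_unipotent (A *m B).
Proof.
move=> /upper_unipotentP[A1 A0] /upper_unipotentP[B1 B0].
apply/upper_unipotentP; split=> [i|i j lt_ji].
  rewrite !mxE (bigD1 i) //= A1 B1 mul1r big1 ?addr0 // => k ki.
  case: (ltngtP k i) => [lt_ki|lt_ik|/val_inj eki]; first by rewrite A0 ?mul0r.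
    by rewrite B0 ?mulr0.
  by rewrite eki eqxx in ki.
rewrite !mxE big1 // => k _.
case: (ltnP k i) => [lt_ki|le_ik]; first by rewrite A0 ?mul0r.
by rewrite B0 ?mulr0 // (leq_trans lt_ji).
Qed.

Lemma inFmx1 : inFmx q (1%:M : 'M[E]_n.+1).
Proof.
by apply/inFmxP => i j; rewrite mxE; case: eqP => _; [exact: inF1 | exact: inF0].
Qed.

Lemma inFmx_mul (A B : 'M[E]_n.+1) : inFmx q A -> inFmx q B -> inFmx q (A *m B).
Proof.
move=> /inFmxP FA /inFmxP FB; apply/inFmxP => i j; rewrite mxE.
by apply: inF_sum => // k _; apply: inFM.
Qed.

Lemma inF_superdiag_sum (M : 'M[E]_n.+1) : inFmx q M -> inF q (superdiag_sum M).
Proof. by move/inFmxP=> FM; apply: inF_sum. Qed.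

Lemma HF_group_set : group_set (HF E q n).
Proof.
apply/group_setP; split=> [|x y]; first by rewrite inE GL_1E inFmx1.
by rewrite !inE GL_MxE; apply: inFmx_mul.
Qed.

Lemma NF_group_set : group_set (NF E q n).
Proof.
apply/group_setP; split=> [|x y]; first by rewrite inE GL_1E inFmx1 upper_unipotent1.
rewrite !inE GL_MxE => /andP[ux Fx] /andP[uy Fy].
by rewrite upper_unipotent_mul ?inFmx_mul.
Qed.

Canonical HF_group := Group HF_group_set.
Canonical NF_group := Group NF_group_set.

Lemma NF_sub_HF : NF E q n \subset HF E q n.
Proof. by apply/subsetP => x; rewrite !inE => /andP[]. Qed.

End FMatrices.

Section GL.
Variables (E : finFieldType) (n : nat).
Local Notation G := {'GL_n.+1[E]}.
Local Notation omega := (omega E n).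

Lemma toGLK (M : 'M[E]_n.+1) : M \in unitmx -> GLval (toGL M) = M.
Proof. by move=> uM; rewrite /toGL val_insubd uM. Qed.

Lemma GLvalK (g : G) : toGL (GLval g) = g.
Proof. exact: valKd. Qed.

Lemma toGL1 : toGL 1%:M = 1%g :> G.
Proof.
apply/val_inj; change (GLval (toGL (1%:M : 'M[E]_n.+1)) = GLval (1%g : G)).
by rewrite GL_1E toGLK ?unitmx1.
Qed.

Lemma omegaE (i j : 'I_n.+1) : omega i j = (j == rev_ord i)%:R.
Proof.
rewrite mxE; congr (_%:R); have := ltn_ord i.
case: eqP => [ij|nij]; case: eqP => [ji|nji] //= lt_in.
  by case: nji; apply/val_inj => /=; lia.
by case: nij; rewrite ji /=; lia.
Qed.

Lemma mul_omega_mx (A : 'M[E]_n.+1) i j : (omega *m A) i j = A (rev_ord i) j.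
Proof.
rewrite mxE (bigD1 (rev_ord i)) //= omegaE eqxx mul1r big1 ?addr0 // => k /negbTE ki.
by rewrite omegaE ki mul0r.
Qed.

Lemma mul_mx_omega (A : 'M[E]_n.+1) i j : (A *m omega) i j = A i (rev_ord j).
Proof.
rewrite mxE (bigD1 (rev_ord j)) //= omegaE rev_ordK eqxx mulr1 big1 ?addr0 // => k kj.
rewrite omegaE; case: eqP => [jk|_]; last by rewrite mulr0.
by rewrite jk rev_ordK eqxx in kj.
Qed.

Lemma omega_sqr : omega *m omega = 1%:M.
Proof.
by apply/matrixP => i j; rewrite mul_omega_mx omegaE !mxE rev_ordK eq_sym.
Qed.

Lemma omega_unit : omega \in unitmx.
Proof. by case/mulmx1_unit: omega_sqr. Qed.

Definition omegaG : G := toGL omega.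

Definition tinv (g : G) : G := toGL (invmx (GLval g))^T.

Lemma omegaG_val : GLval omegaG = omega.
Proof. exact: toGLK omega_unit. Qed.

Lemma tinv_val g : GLval (tinv g) = (invmx (GLval g))^T.
Proof. by apply: toGLK; rewrite unitmx_tr unitmx_inv; exact: (GL_unit g). Qed.

Lemma omegaG_sqr : (omegaG * omegaG = 1)%g.
Proof.
apply/val_inj; change (GLval (omegaG * omegaG)%g = GLval 1%g).
by rewrite GL_MxE omegaG_val omega_sqr.
Qed.

Lemma tinvK : involutive tinv.
Proof. by move=> g; apply/val_inj; rewrite /= !tinv_val trmx_inv trmxK invmxK. Qed.

Lemma tinvM a b : tinv (a * b)%g = (tinv a * tinv b)%g.
Proof.
apply/val_inj; change (GLval (tinv (a * b)%g) = GLval (tinv a * tinv b)%g).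
rewrite GL_MxE !tinv_val -!GL_VxE invMg GL_MxE trmx_mul.
by rewrite !GL_VxE.
Qed.

Lemma toGL_omega_tinv (g : G) :
  toGL (omega *m (invmx (GLval g))^T) = (omegaG * tinv g)%g.
Proof. by rewrite -[RHS]GLvalK GL_MxE omegaG_val tinv_val. Qed.

Lemma GL_row_ord_max_neq0 (g : G) : row ord_max (GLval g) != 0.
Proof.
apply/eqP => /(congr1 (mulmx^~ (invmx (GLval g)))).
rewrite /= -row_mul mulmxV ?mul0mx; last exact: (GL_unit g).
by move=> /rowP/(_ ord_max); rewrite !mxE eqxx => /eqP; rewrite oner_eq0.
Qed.

End GL.

Lemma sum_repr_eq0 (F : fieldType) (gT : finGroupType) (G H : {group gT}) d
    (rG : mx_representation F G d) :
  H \subset G ->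
  (forall lam : 'rV_d, (forall h, h \in H -> lam *m rG h = lam) -> lam = 0) ->
  \sum_(h in H) rG h = 0.
Proof.
move=> sHG fix0; set P := \sum_(h in H) rG h.
have PfixH h : h \in H -> P *m rG h = P.
  move=> Hh; rewrite mulmx_suml [RHS](reindex_inj (mulIg h)) /=.
  apply: eq_big => [k|k Hk]; first by rewrite groupMr.
  by rewrite repr_mxM ?(subsetP sHG).
apply/row_matrixP => i; rewrite row0; apply: fix0 => h Hh.
by rewrite -row_mul PfixH.
Qed.

Lemma sum_rcosets_repr (gT : finGroupType) (V : nmodType) (N H : {group gT})
    (f : gT -> V) :
  N \subset H -> (forall x h, x \in N -> h \in H -> f (x * h)%g = f h) ->
  (\sum_(C in rcosets N H) f (repr C)) *+ #|N| = \sum_(h in H) f h.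
Proof.
move=> sNH fN; have partH := rcosets_partition sNH.
have /and3P[_ tI _] := partH.
rewrite -[in RHS](cover_partition partH) (big_trivIset _ tI) /= -sumrMnl.
apply: eq_bigr => _ /rcosetsP[h Hh ->].
have fNh y : y \in (N :* h)%g -> f y = f h by case/rcosetP=> x Nx ->; apply: fN.
rewrite (eq_bigr (fun=> f h)); last by move=> y /fNh.
by rewrite sumr_const card_rcoset (fNh _ (mem_repr h (rcoset_refl N h))).
Qed.

Section Whittaker.
Variables (E : finFieldType) (q : nat) (hE : #|E| = (q ^ 2)%N)
  (psi : E -> algC) (z : E) (n d : nat)
  (rG : mx_representation algC [set: {'GL_n.+1[E]}]%G d).
Local Notation G := {'GL_n.+1[E]}.
Local Notation HF := (HF E q n).
Local Notation NF := (NF E q n).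
Local Notation omegaG := (omegaG E n).

Lemma psiE_inF x : inF q x -> psiE q psi z x = psi 0.
Proof. by rewrite /psiE /Defs.inF => /eqP->; rewrite subrr mul0r. Qed.

Lemma whittaker_psi0 lam : whittaker_functional q psi z rG lam -> psi 0 = 1.
Proof.
case=> nz_lam lamN; have := lamN 1%:M (upper_unipotent1 _ _).
rewrite toGL1 (repr_mx1 rG) mulmx1 psiE_inF; last exact/inF_superdiag_sum/inFmx1.
move/eqP; rewrite -subr_eq0 -{1}[lam]scale1r -scalerBl scaler_eq0 (negbTE nz_lam) orbF.
by rewrite subr_eq0 => /eqP.
Qed.

Lemma tinv_HF (g : G) : (tinv g \in HF) = (g \in HF).
Proof.
suff HFtinv h : h \in HF -> tinv h \in HF.
  by apply/idP/idP => [/HFtinv|/HFtinv //]; rewrite tinvK.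
move=> HFh; have := groupVr (G := HF_group hE n) HFh.
rewrite !inE tinv_val GL_VxE => /inFmxP Fh; apply/inFmxP => i j.
by rewrite mxE.
Qed.

Lemma omega_tinv_NF (u : G) : u \in NF -> (omegaG * tinv u * omegaG)%g \in NF.
Proof.
move=> NFu; have := groupVr (G := NF_group hE n) NFu.
rewrite !inE => /andP[/upper_unipotentP[u1 u0] /inFmxP Fu].
have uE (i j : 'I_n.+1) :
    GLval (omegaG * tinv u * omegaG)%g i j = GLval (u^-1)%g (rev_ord j) (rev_ord i).
  by rewrite !GL_MxE omegaG_val tinv_val mul_mx_omega mul_omega_mx mxE GL_VxE.
apply/andP; split; last first.
  by apply/inFmxP => i j; have := Fu (rev_ord j) (rev_ord i); rewrite -uE.
apply/upper_unipotentP; split=> [i|i j lt_ji].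
  by rewrite -[RHS](u1 (rev_ord i)) -uE.
rewrite -[RHS](u0 (rev_ord j) (rev_ord i)); first by rewrite -uE.
by rewrite /=; have := ltn_ord i; lia.
Qed.

Lemma whittaker_omega_tinv_NF lam (u h : G) :
  whittaker_functional q psi z rG lam -> u \in NF ->
  lam *m rG (omegaG * tinv (u * h))%g = lam *m rG (omegaG * tinv h)%g.
Proof.
move=> wlam NFu; have [_ lamN] := wlam.
have -> : (omegaG * tinv (u * h))%g = ((omegaG * tinv u * omegaG) * (omegaG * tinv h))%g.
  by rewrite tinvM !mulgA -(mulgA _ omegaG omegaG) omegaG_sqr mulg1.
move: (omega_tinv_NF NFu); rewrite inE => /andP[uu Fu].
rewrite repr_mxM ?inE // mulmxA -[X in rG X]GLvalK lamN //.
by rewrite psiE_inF ?inF_superdiag_sum // (whittaker_psi0 wlam) scale1r.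
Qed.

Lemma sum_HF_tinv_eq0 : ~ distinguished q rG -> \sum_(h in HF) rG (tinv h) = 0.
Proof.
move=> not_dist; rewrite (reindex_inj (can_inj (@tinvK E n))) /=.
rewrite (eq_bigl (mem HF)) => [|h]; last by rewrite tinv_HF.
under eq_bigr do rewrite tinvK.
apply: (sum_repr_eq0 (G := [set: G]%G) (H := HF_group hE n)) => [|lam lamH].
  exact: subsetT.
by have [//|nz_lam] := eqVneq lam 0; case: not_dist; exists lam.
Qed.

Lemma Zeta_Wtilde_const_eq0 W :
  whittaker_model q psi z rG W -> ~ distinguished q rG ->
  Zeta q (Wtilde W) (fun=> 1) = 0.
Proof.
case=> lam [v [wlam WE]] not_dist.
pose f (h : G) := (lam *m rG (omegaG * tinv h)%g *m v) 0 0.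
have ZetaE : Zeta q (Wtilde W) (fun=> 1) = \sum_(C in rcosets NF HF) f (repr C).
  by apply: eq_bigr => C _; rewrite mulr1 /Wtilde WE toGL_omega_tinv.
have fN u h : u \in NF -> h \in HF -> f (u * h)%g = f h.
  by move=> NFu _; rewrite /f whittaker_omega_tinv_NF.
have sum_f : \sum_(h in HF) f h = 0.
  under eq_bigr do rewrite /f repr_mxM ?inE // mulmxA.
  by rewrite -summxE -mulmx_suml -mulmx_sumr sum_HF_tinv_eq0 // mulmx0 mul0mx mxE.
have := sum_rcosets_repr (N := NF_group hE n) (H := HF_group hE n) (NF_sub_HF E q n) fN.
rewrite -ZetaE sum_f => /eqP; rewrite mulrn_eq0 => /orP[|/eqP //].
by rewrite (negbTE (lt0n_neq0 (cardG_gt0 (NF_group hE n)))).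
Qed.

End Whittaker.

Section Zeta.
Variables (E : finFieldType) (q : nat) (hE : #|E| = (q ^ 2)%N) (n : nat).

Definition puncture (phi : 'rV[E]_n.+1 -> algC) x := if x == 0 then 0 else phi x.

Lemma Zeta_puncture W phi : Zeta q W (puncture phi) = Zeta q W phi.
Proof. by apply: eq_bigr => C _; rewrite /puncture (negbTE (GL_row_ord_max_neq0 _)). Qed.

Lemma fourier_puncture ps phi y :
  fourier q ps phi y = fourier q ps (puncture phi) y + phi 0 * ps 0.
Proof.
have F0 : inFvec q (0 : 'rV[E]_n.+1) by apply/forallP => j; rewrite mxE; apply: inF0 hE.
have phi'0 : puncture phi 0 = 0 by rewrite /puncture eqxx.
rewrite /fourier (bigD1 0 F0) [in RHS](bigD1 0 F0) phi'0 /=.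
rewrite mul0r add0r mul0mx mxE addrC; congr (_ + _).
by apply: eq_bigr => x /andP[_ /negbTE x0]; rewrite /puncture x0.
Qed.

Lemma Zeta_addr_const W (f g : 'rV[E]_n.+1 -> algC) a :
  (forall y, g y = f y + a) -> Zeta q W g = Zeta q W f + a * Zeta q W (fun=> 1).
Proof.
move=> gE; rewrite /Zeta mulr_sumr -big_split; apply: eq_bigr => C _ /=.
by rewrite gE mulrDr mulr1 [a * _]mulrC.
Qed.

End Zeta.

Unset Implicit Arguments.
Theorem proposition3p3
  (E : finFieldType) (q : nat) (hE : #|E| = (q ^ 2)%N)
  (psi : E -> algC) (hpsi : nontrivial_additive_char q psi)
  (z : E) (hz : theta q z != z)
  (n d : nat) (rG : mx_representation algC [set: {'GL_n.+1[E]}]%G d)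
  (hirr : mx_irreducible rG) (hcusp : cuspidal rG)
  (hnd : ~ distinguished q rG)
  (c : algC) (hc : is_gamma q psi z rG c) :
  forall (phi : 'rV[E]_n.+1 -> algC) (W : 'M[E]_n.+1 -> algC),
    whittaker_model q psi z rG W ->
    c * Zeta q W phi = Zeta q (Wtilde W) (fourier q psi phi).
Proof.
move=> phi W hW; have [lam [v [wlam _]]] := hW.
have fourierE y : fourier q psi phi y = fourier q psi (puncture phi) y + phi 0.
  by rewrite (fourier_puncture hE) (whittaker_psi0 hE wlam) mulr1.
rewrite -Zeta_puncture (hc W hW) /puncture ?eqxx //.
by rewrite (Zeta_addr_const _ _ fourierE) (Zeta_Wtilde_const_eq0 hE hW hnd) mulr0 addr0.
Qed.
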